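(* Let $L$ be an i--lattice. If ${\rm Con}(L)$ is a chain, then ${\rm Con}_{\mathbb{I}}(L)={\rm Con}(L)$.
   Context: An i--lattice is a lattice $L$ with a unary operation $'$ such that $a''=a$ and $a\leq b$ implies $b'\leq a'$ for all $a,b\in L$. ${\rm Con}(L)$ is the lattice of lattice congruences of $L$, and ${\rm Con}_{\mathbb{I}}(L)$ is the set of lattice congruences $\theta$ that also preserve the involution, i.e. $(a,b)\in\theta$ implies $(a',b')\in\theta$. *)

From HB Require Import structures.
From mathcomp Require Import all_boot all_order.
Set Implicit Arguments. Unset Strict Implicit. Unset Printing Implicit Defensive.
Import Order.TTheory.
Local Open Scope order_scope.

Definition is_ilattice_inv (d : Order.disp_t) (L : latticeType d) (inv : L -> L) : Prop :=
  (forall a : L, inv (inv a) = a) /\ (forall a b : L, a <= b -> inv b <= inv a).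

Definition is_lattice_congruence (d : Order.disp_t) (L : latticeType d)
  (theta : L -> L -> Prop) : Prop :=
  [/\ (forall a, theta a a),
      (forall a b, theta a b -> theta b a),
      (forall a b c, theta a b -> theta b c -> theta a c),
      (forall a b c e, theta a b -> theta c e -> theta (a `&` c) (b `&` e)) &
      (forall a b c e, theta a b -> theta c e -> theta (a `|` c) (b `|` e))].

Definition Con_is_chain (d : Order.disp_t) (L : latticeType d) : Prop :=
  forall theta phi : L -> L -> Prop,
    is_lattice_congruence theta -> is_lattice_congruence phi ->
    (forall a b, theta a b -> phi a b) \/ (forall a b, phi a b -> theta a b).

Definition preserves_inv (d : Order.disp_t) (L : latticeType d) (inv : L -> L)
  (theta : L -> L -> Prop) : Prop :=
  forall a b, theta a b -> theta (inv a) (inv b).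

Definition in_ConI (d : Order.disp_t) (L : latticeType d) (inv : L -> L)
  (theta : L -> L -> Prop) : Prop :=
  is_lattice_congruence theta /\ preserves_inv inv theta.

From mathcomp Require Import all_boot all_order.
Set Implicit Arguments. Unset Strict Implicit. Unset Printing Implicit Defensive.
Import Order.TTheory.
Local Open Scope order_scope.

(* The involution is a dual automorphism of the lattice, so pulling a
   congruence theta back along it gives again a congruence theta', with
   theta' a b <-> theta a' b'.  As Con(L) is a chain, theta and theta' are
   comparable, and either inclusion says that theta is closed under the
   involution, because a'' = a. *)

Section Involution.

Variables (d : Order.disp_t) (L : latticeType d) (inv : L -> L).
Hypothesis invK : involutive inv.
Hypothesis inv_anti : forall a b : L, a <= b -> inv b <= inv a.

Lemma inv_le (a b : L) : (inv a <= inv b) = (b <= a).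
Proof.
apply/idP/idP; last exact: inv_anti.
by move=> /inv_anti; rewrite !invK.
Qed.

Lemma invI (a b : L) : inv (a `&` b) = inv a `|` inv b.
Proof.
apply/le_anti/andP; split; last by rewrite leUx !inv_le leIl leIr.
rewrite -[inv a `|` inv b]invK inv_le lexI.
by rewrite -{2}[a]invK -{3}[b]invK !inv_le leUl leUr.
Qed.

Lemma invU (a b : L) : inv (a `|` b) = inv a `&` inv b.
Proof. by rewrite -[a]invK -[b]invK -invI !invK. Qed.

Definition inv_rel (theta : L -> L -> Prop) (a b : L) : Prop :=
  theta (inv a) (inv b).

Lemma inv_rel_congruence (theta : L -> L -> Prop) :
  is_lattice_congruence theta -> is_lattice_congruence (inv_rel theta).
Proof.
case=> refl sym trans meet join; split; rewrite /inv_rel.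
- by move=> a; apply: refl.
- by move=> a b; apply: sym.
- by move=> a b c; apply: trans.
- by move=> a b c e hab hce; rewrite !invI; apply: join.
- by move=> a b c e hab hce; rewrite !invU; apply: meet.
Qed.

Lemma preserves_inv_comparable (theta : L -> L -> Prop) :
  (forall a b, theta a b -> inv_rel theta a b) \/
  (forall a b, inv_rel theta a b -> theta a b) ->
  preserves_inv inv theta.
Proof.
case=> sub a b hab; first exact: sub.
by apply: sub; rewrite /inv_rel !invK.
Qed.

End Involution.

Theorem corollary4p7 (d : Order.disp_t) (L : latticeType d) (inv : L -> L) :
  is_ilattice_inv inv -> Con_is_chain L ->
  forall theta : L -> L -> Prop,
    in_ConI inv theta <-> is_lattice_congruence theta.
Proof.
case=> invK inv_anti chain theta; split; first by case.
move=> cong; split=> //.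
apply: (preserves_inv_comparable invK).
exact: chain _ _ cong (inv_rel_congruence invK inv_anti cong).
Qed.
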